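(* Let $x\in\mathbb{R}^n$ and let $m(y)=c+g^T(y-x)+\tfrac12(y-x)^TH(y-x)$ with $c\in\mathbb{R}$, $g\in\mathbb{R}^n$, $H\in\mathbb{R}^{n\times n}$ symmetric. Let $\Delta>0$. (a) Suppose $f:\mathbb{R}^n\to\mathbb{R}$ is bounded below and continuously differentiable with $\nabla f$ Lipschitz with constant $L_{\nabla f}$, and there is $\kappa>0$ with $|m(y)-f(x)-\nabla f(x)^T(y-x)|\le\kappa\Delta^2$ for all $y\in B(x,\Delta)$. Then for every $\kappa_H\ge\|H\|$, for all $y\in B(x,\Delta)$: $|m(y)-f(y)|\le\kappa_{\mathrm{mf}}\Delta^2$ and $\|\nabla m(y)-\nabla f(y)\|\le\kappa_{\mathrm{mg}}\Delta$, where $\kappa_{\mathrm{mf}}=\kappa+\frac{L_{\nabla f}}{2}$ and $\kappa_{\mathrm{mg}}=2\kappa+L_{\nabla f}+2\kappa_H$. (b) Suppose $f:\mathbb{R}^n\to\mathbb{R}$ is bounded below and twice continuously differentiable with $\nabla^2 f$ Lipschitz with constant $L_{\nabla^2 f}$, and there is $\kappa>0$ with $\left|m(y)-f(x)-\nabla f(x)^T(y-x)-\tfrac12(y-x)^T\nabla^2 f(x)(y-x)\right|\le\kappa\Delta^3$ for all $y\in B(x,\Delta)$. Then for all $y\in B(x,\Delta)$: $|m(y)-f(y)|\le\kappa_{\mathrm{mf}}\Delta^3$, $\|\nabla m(y)-\nabla f(y)\|\le\kappa_{\mathrm{mg}}\Delta^2$, $\|\nabla^2 m(y)-\nabla^2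 f(y)\|\le\kappa_{\mathrm{mh}}\Delta$, with $\kappa_{\mathrm{mf}}=\kappa+\frac{L_{\nabla^2 f}}{6}$, $\kappa_{\mathrm{mg}}=34\kappa+\frac{L_{\nabla^2 f}}{2}$, $\kappa_{\mathrm{mh}}=24\kappa+L_{\nabla^2 f}$.
   Context: Norms are Euclidean (operator 2-norm for matrices); $B(x,\Delta)=\{y:\|y-x\|\le\Delta\}$. *)

From HB Require Import structures.
From mathcomp Require Import all_boot all_order all_algebra.
From mathcomp Require Import boolp classical_sets reals.
Set Implicit Arguments. Unset Strict Implicit. Unset Printing Implicit Defensive.
Import Order.TTheory GRing.Theory Num.Theory.
Local Open Scope ring_scope.
Local Open Scope classical_set_scope.

Section Defs.
Variables (R : realType) (n : nat).

Definition dotv (u v : 'cV[R]_n) : R := \sum_(i < n) u i 0 * v i 0.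

Definition enorm (v : 'cV[R]_n) : R := Num.sqrt (dotv v v).

Definition opnorm (A : 'M[R]_n) : R :=
  sup [set enorm (A *m v) | v in [set v : 'cV[R]_n | enorm v <= 1]].

Definition inball (x : 'cV[R]_n) (D : R) (y : 'cV[R]_n) : Prop :=
  enorm (y - x) <= D.

Definition is_gradient (f : 'cV[R]_n -> R) (g : 'cV[R]_n) (y : 'cV[R]_n) : Prop :=
  forall eps : R, 0 < eps -> exists2 del : R, 0 < del &
    forall h : 'cV[R]_n, enorm h <= del ->
      `|f (y + h) - f y - dotv g h| <= eps * enorm h.

Definition is_jacobian (F : 'cV[R]_n -> 'cV[R]_n) (A : 'M[R]_n) (y : 'cV[R]_n) : Prop :=
  forall eps : R, 0 < eps -> exists2 del : R, 0 < del &
    forall h : 'cV[R]_n, enorm h <= del ->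
      enorm (F (y + h) - F y - A *m h) <= eps * enorm h.

Definition qmodel (x : 'cV[R]_n) (c : R) (g : 'cV[R]_n) (H : 'M[R]_n)
  (y : 'cV[R]_n) : R :=
  c + dotv g (y - x) + 2^-1 * dotv (y - x) (H *m (y - x)).

(* its gradient g + H (y - x) (H symmetric) and Hessian H *)
Definition qmodel_grad (x : 'cV[R]_n) (g : 'cV[R]_n) (H : 'M[R]_n)
  (y : 'cV[R]_n) : 'cV[R]_n := g + H *m (y - x).

End Defs.

From HB Require Import structures.
From mathcomp Require Import all_boot all_order all_algebra.
From mathcomp Require Import boolp classical_sets functions reals.
From mathcomp Require Import topology normedtype derive.
From mathcomp Require Import ring lra.
Import Order.TTheory GRing.Theory Num.Theory.
Import numFieldNormedType.Exports.
Set Implicit Arguments. Unset Strict Implicit. Unset Printing Implicit Defensive.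
Local Open Scope ring_scope.
Local Open Scope classical_set_scope.

(* Along a segment t |-> p + t s the hypotheses give one-variable derivatives,
   and the mean value theorem turns the Lipschitz bound on the highest
   derivative into the Taylor remainder bounds L/2 |s|^2 and L/6 |s|^3, as well
   as the symmetry of the Hessian (via second differences).  On B(x, D) the
   model error m - f is then a Taylor remainder plus a quadratic
   q(s) = a + b.s + 1/2 s.A s with b = g - gf x (and A = H - Hf x at second
   order), which the hypothesis bounds by K.  Comparing q(s), q(-s) and q(0)
   gives |b| <= K / D and |s.A s| <= 4 K; since A is symmetric, polarization
   bounds its operator norm by 4 K / D^2. *)

Section RealLine.
Variable R : realType.
Implicit Types (u v w du dv dw : R -> R) (a b t : R).

Lemma is_derive1_approx v t l :
  (forall e : R, 0 < e -> exists2 d : R, 0 < d &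
     forall h : R, `|h| <= d -> `|v (t + h) - v t - h * l| <= e * `|h|) ->
  is_derive t 1 v l.
Proof.
move=> approx.
have quot : (fun h : R => h^-1 *: ((v \o shift t) (h *: 1) - v t)) @ 0^' --> l.
  apply/cvgrPdist_le => e e_gt0; have [d d_gt0 approx_d] := approx e e_gt0.
  near=> h.
  have h_neq0 : h != 0 by near: h; exact: nbhs_dnbhs_neq.
  have h_le : `|h| <= d.
    near: h; apply: nbhs_dnbhs; exists d => //= z.
    by rewrite /ball /= sub0r normrN => /ltW.
  rewrite /= /shift [h *: 1]mulr1 [h + t]addrC.
  have -> : l - h^-1 *: (v (t + h) - v t) = - h^-1 * (v (t + h) - v t - h * l).
    by rewrite /GRing.scale /=; field.
  by rewrite normrM normrN normfV ler_pdivrMl ?normr_gt0 // [_ * e]mulrC approx_d.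
by apply: DeriveDef; [exact: cvgP quot | exact: cvg_lim quot].
Unshelve. all: by end_near.
Qed.

Lemma derive_le0_nincr u du (a b : R) : a <= b ->
  (forall t, is_derive t 1 u (du t)) -> (forall t, a <= t <= b -> du t <= 0) ->
  u b <= u a.
Proof.
move=> ab du_u du_le0.
have cont : {within `[a, b], continuous u}.
  by apply: derivable_within_continuous => t _; exact: ex_derive.
have [t tab incr] := MVT_segment ab (fun t _ => du_u t) cont.
by rewrite -subr_le0 incr mulr_le0_ge0 ?subr_ge0 // du_le0 // !(itvP tab).
Qed.

Lemma ler_norm_increment v dv w dw (a b : R) : a <= b ->
  (forall t, is_derive t 1 v (dv t)) -> (forall t, is_derive t 1 w (dw t)) ->
  (forall t, a <= t <= b -> `|dv t| <= dw t) -> `|v b - v a| <= w b - w a.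
Proof.
move=> ab dv_v dw_w dv_le.
have upper : v b - w b <= v a - w a.
  apply: (derive_le0_nincr ab (fun t => is_deriveB (dv_v t) (dw_w t))).
  by move=> t /dv_le; rewrite ler_norml /= subr_le0 => /andP[].
have lower : - v b - w b <= - v a - w a.
  apply: (derive_le0_nincr ab (fun t => is_deriveB (is_deriveN (dv_v t)) (dw_w t))).
  by move=> t /dv_le; rewrite ler_norml /= => /andP[? _]; lra.
by rewrite ler_norml; apply/andP; split; lra.
Qed.

Lemma taylor_increment_le v dv w dw (K b : R) k : 0 <= b ->
  (forall t, is_derive t 1 v (dv t)) -> (forall t, is_derive t 1 w (dw t)) ->
  (forall t, 0 <= t <= b -> `|dv t - dw t| <= K * t ^+ k) ->
  `|v b - w b - (v 0 - w 0)| <= K / k.+1%:R * b ^+ k.+1.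
Proof.
move=> b0 dv_v dw_w close.
have pow t : is_derive t 1 ((K / k.+1%:R) \*: (@id R ^+ k.+1)) (K * t ^+ k).
  apply: is_derive_eq.
  by rewrite /= scaler1 /GRing.scale /= mulrA divfK ?pnatr_eq0.
have := ler_norm_increment b0 (fun t => is_deriveB (dv_v t) (dw_w t)) pow close.
by rewrite exprfctE /= expr0n /= scaler0 subr0.
Qed.
End RealLine.

Section EuclideanSpace.
Variables (R : realType) (n : nat).
Implicit Types (u v w : 'cV[R]_n) (A : 'M[R]_n).

Lemma dotvC u v : dotv u v = dotv v u.
Proof. by apply: eq_bigr => i _; rewrite mulrC. Qed.

Lemma dotvDl u v w : dotv (u + v) w = dotv u w + dotv v w.
Proof. by rewrite /dotv -big_split; apply: eq_bigr => i _; rewrite mxE mulrDl. Qed.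

Lemma dotvDr u v w : dotv w (u + v) = dotv w u + dotv w v.
Proof. by rewrite dotvC dotvDl !(dotvC w). Qed.

Lemma dotvZl (a : R) u v : dotv (a *: u) v = a * dotv u v.
Proof. by rewrite /dotv mulr_sumr; apply: eq_bigr => i _; rewrite mxE mulrA. Qed.

Lemma dotvZr (a : R) u v : dotv u (a *: v) = a * dotv u v.
Proof. by rewrite dotvC dotvZl dotvC. Qed.

Lemma dotvNl u v : dotv (- u) v = - dotv u v.
Proof. by rewrite -scaleN1r dotvZl mulN1r. Qed.

Lemma dotvNr u v : dotv u (- v) = - dotv u v.
Proof. by rewrite dotvC dotvNl dotvC. Qed.

Lemma dotvBl u v w : dotv (u - v) w = dotv u w - dotv v w.
Proof. by rewrite dotvDl dotvNl. Qed.

Lemma dotvBr u v w : dotv w (u - v) = dotv w u - dotv w v.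
Proof. by rewrite dotvDr dotvNr. Qed.

Lemma dotv0l v : dotv 0 v = 0.
Proof. by rewrite -(scale0r 0) dotvZl mul0r. Qed.

Lemma dotv0r v : dotv v 0 = 0.
Proof. by rewrite dotvC dotv0l. Qed.

Lemma dotv_mulmx u A v : dotv u (A *m v) = dotv (A^T *m u) v.
Proof.
rewrite /dotv; under eq_bigr do rewrite mxE big_distrr.
rewrite exchange_big; apply: eq_bigr => j _ /=; rewrite mxE big_distrl.
by apply: eq_bigr => i _; rewrite !mxE mulrCA mulrA.
Qed.

Lemma dotvv_ge0 v : 0 <= dotv v v.
Proof. by apply: sumr_ge0 => i _; rewrite -expr2 sqr_ge0. Qed.

Lemma enorm_ge0 v : 0 <= enorm v.
Proof. exact: sqrtr_ge0. Qed.

Lemma sqr_enorm v : enorm v ^+ 2 = dotv v v.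
Proof. by rewrite sqr_sqrtr // dotvv_ge0. Qed.

Lemma enorm0 : enorm (0 : 'cV[R]_n) = 0.
Proof. by rewrite /enorm dotv0l sqrtr0. Qed.

Lemma enorm0_eq0 v : enorm v = 0 -> v = 0.
Proof.
move=> /eqP; rewrite sqrtr_eq0 => vv_le0.
have : dotv v v == 0 by rewrite eq_le vv_le0 dotvv_ge0.
rewrite psumr_eq0 => [/allP v0|i _]; last by rewrite -expr2 sqr_ge0.
apply/matrixP => i j; rewrite (ord1 j) mxE.
by have := v0 i (mem_index_enum _); rewrite -expr2 sqrf_eq0 => /eqP.
Qed.

Lemma enorm_gt0 v : (0 < enorm v) = (v != 0).
Proof.
rewrite lt_def enorm_ge0 andbT.
apply/idP/idP; apply: contra_neq; last exact: enorm0_eq0.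
by move->; exact: enorm0.
Qed.

Lemma enormZ (a : R) v : enorm (a *: v) = `|a| * enorm v.
Proof. by rewrite /enorm dotvZl dotvZr mulrA -expr2 sqrtrM ?sqr_ge0 // sqrtr_sqr. Qed.

Lemma enormN v : enorm (- v) = enorm v.
Proof. by rewrite -scaleN1r enormZ normrN normr1 mul1r. Qed.

Lemma ler_norm_dotv u v : `|dotv u v| <= enorm u * enorm v.
Proof.
have [->|v0] := eqVneq v 0; first by rewrite dotv0r normr0 enorm0 mulr0.
have vv_gt0 : 0 < dotv v v by rewrite -sqr_enorm exprn_gt0 ?enorm_gt0.
have := dotvv_ge0 (u - (dotv u v / dotv v v) *: v).
rewrite !(dotvBl, dotvBr, dotvZl, dotvZr) (dotvC v u) divfK ?gt_eqF //.
rewrite subrr mulr0 subr0 subr_ge0 mulrAC ler_pdivrMr // -expr2 => sq_le.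
rewrite -(@ler_pXn2r _ 2) ?nnegrE ?mulr_ge0 ?enorm_ge0 //.
by rewrite exprMn !sqr_enorm real_normK ?num_real.
Qed.

Lemma ler_enormD u v : enorm (u + v) <= enorm u + enorm v.
Proof.
rewrite -(@ler_pXn2r _ 2) ?nnegrE ?addr_ge0 ?enorm_ge0 //.
rewrite sqr_enorm !(dotvDl, dotvDr) (dotvC v u) -!sqr_enorm.
have := ler_norm_dotv u v; have := ler_norm (dotv u v); nra.
Qed.

Lemma ler_enormB u v : enorm (u - v) <= enorm u + enorm v.
Proof. by rewrite -(enormN v) ler_enormD. Qed.

Lemma opnorm_has_sup A :
  has_sup [set enorm (A *m v) | v in [set v : 'cV[R]_n | enorm v <= 1]].
Proof.
split; first by exists (enorm (A *m 0)), 0 => //=; rewrite enorm0 ler01.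
exists (Num.sqrt (\sum_i enorm (row i A)^T ^+ 2)) => _ [v /= v_le1 <-].
rewrite ler_sqrt ?sumr_ge0 // => [|i _]; last exact: sqr_ge0.
apply: ler_sum => i _.
have entry : (A *m v) i 0 = dotv (row i A)^T v.
  by rewrite mxE; apply: eq_bigr => j _; rewrite !mxE.
rewrite -expr2 entry -real_normK ?num_real //.
apply: (@le_trans _ _ ((enorm (row i A)^T * enorm v) ^+ 2)).
  by rewrite lerXn2r ?nnegrE ?mulr_ge0 ?enorm_ge0 // ler_norm_dotv.
by rewrite exprMn ler_piMr ?sqr_ge0 // expr_le1 ?enorm_ge0.
Qed.

Lemma opnorm_ge0 A : 0 <= opnorm A.
Proof.
apply: (sup_upper_bound (opnorm_has_sup A)).
by exists 0; rewrite /= ?enorm0 ?ler01 // mulmx0 enorm0.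
Qed.

Lemma ler_enorm_mulmx A v : enorm (A *m v) <= opnorm A * enorm v.
Proof.
have [->|v0] := eqVneq v 0; first by rewrite mulmx0 enorm0 mulr0.
have v_gt0 : 0 < enorm v by rewrite enorm_gt0.
rewrite -ler_pdivrMr // mulrC -[(enorm v)^-1]ger0_norm ?invr_ge0 ?enorm_ge0 //.
rewrite -enormZ.
apply: (sup_upper_bound (opnorm_has_sup A)).
exists ((enorm v)^-1 *: v); last by rewrite -scalemxAr.
by rewrite /= enormZ ger0_norm ?invr_ge0 ?enorm_ge0 // mulVf ?gt_eqF.
Qed.

Lemma opnorm_le A M : (forall v, enorm v <= 1 -> enorm (A *m v) <= M) -> opnorm A <= M.
Proof.
move=> bound; apply: ge_sup; first by exists (enorm (A *m 0)), 0 => //=; rewrite enorm0 ler01.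
by move=> _ [v /= /bound ? <-].
Qed.

Lemma enorm_mulmx_le_form A M :
  (forall u v, dotv u (A *m v) = dotv v (A *m u)) ->
  (forall v, `|dotv v (A *m v)| <= M * enorm v ^+ 2) ->
  forall v, enorm (A *m v) <= M * enorm v.
Proof.
move=> A_sym form_le v.
have [->|v0] := eqVneq v 0; first by rewrite mulmx0 enorm0 mulr0.
have v_gt0 : 0 < enorm v by rewrite enorm_gt0.
have M_ge0 : 0 <= M.
  by have := le_trans (normr_ge0 _) (form_le v); rewrite pmulr_lge0 ?exprn_gt0.
have [Av0|Av_neq0] := eqVneq (A *m v) 0; first by rewrite Av0 enorm0 mulr_ge0 ?enorm_ge0.
have Av_gt0 : 0 < enorm (A *m v) by rewrite enorm_gt0.
pose w := (enorm v / enorm (A *m v)) *: (A *m v).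
have w_norm : enorm w = enorm v.
  by rewrite enormZ ger0_norm ?divr_ge0 ?enorm_ge0 // divfK ?gt_eqF.
have w_Av : dotv w (A *m v) = enorm v * enorm (A *m v).
  by rewrite dotvZl -sqr_enorm expr2 mulrA divfK ?gt_eqF.
have polar : 4 * dotv w (A *m v) =
    dotv (w + v) (A *m (w + v)) - dotv (w - v) (A *m (w - v)).
  rewrite mulmxDr mulmxBr !(dotvDl, dotvDr, dotvBl, dotvBr, dotvNl, dotvNr) (A_sym v w).
  ring.
have parallelogram : enorm (w + v) ^+ 2 + enorm (w - v) ^+ 2 = 4 * enorm v ^+ 2.
  rewrite !sqr_enorm !(dotvDl, dotvDr, dotvBl, dotvBr, dotvNl, dotvNr) (dotvC v w).
  by rewrite -!sqr_enorm w_norm; ring.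
have key : enorm v * enorm (A *m v) <= enorm v * (M * enorm v).
  have := ler_norm (dotv (w + v) (A *m (w + v))).
  have := ler_norm (- dotv (w - v) (A *m (w - v))); rewrite normrN.
  have := form_le (w + v); have := form_le (w - v).
  have : M * enorm (w + v) ^+ 2 + M * enorm (w - v) ^+ 2 = 4 * (enorm v * (M * enorm v)).
    by rewrite -mulrDr parallelogram; ring.
  rewrite -w_Av; lra.
by rewrite ler_pM2l in key.
Qed.
End EuclideanSpace.

Section QuadraticOnBall.
Variables (R : realType) (n : nat) (a : R) (b : 'cV[R]_n) (A : 'M[R]_n) (D K : R).
Hypothesis D_gt0 : 0 < D.
Hypothesis quad_le : forall s, enorm s <= D ->
  `|a + dotv b s + 2^-1 * dotv s (A *m s)| <= K.

Let quad_le_opp s : enorm s <= D -> `|a - dotv b s + 2^-1 * dotv s (A *m s)| <= K.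
Proof.
by rewrite -enormN => /quad_le; rewrite mulmxN !dotvNr dotvNl opprK.
Qed.

Lemma quad_ball_const : `|a| <= K.
Proof.
have := quad_le (s := 0); rewrite enorm0 mulmx0 !dotv0r mulr0 !addr0; apply; exact: ltW.
Qed.

Lemma quad_ball_linear : enorm b * D <= K.
Proof.
have [->|b0] := eqVneq b 0.
  by rewrite enorm0 mul0r (le_trans (normr_ge0 _) quad_ball_const).
have b_gt0 : 0 < enorm b by rewrite enorm_gt0.
pose s := (D / enorm b) *: b.
have s_in : enorm s <= D.
  by rewrite enormZ ger0_norm ?divr_ge0 ?enorm_ge0 ?(ltW D_gt0) // divfK ?gt_eqF.
have bs : dotv b s = enorm b * D.
  by rewrite dotvZr -sqr_enorm expr2 mulrA divfK ?gt_eqF // mulrC.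
have := quad_le s_in; have := quad_le_opp s_in.
rewrite bs !ler_norml; lra.
Qed.

Lemma quad_ball_form s : enorm s <= D -> `|dotv s (A *m s)| <= 4 * K.
Proof.
move=> s_in; have := quad_le s_in; have := quad_le_opp s_in.
have := quad_ball_const; rewrite !ler_norml; lra.
Qed.

Lemma quad_ball_mulmx :
  (forall u v, dotv u (A *m v) = dotv v (A *m u)) ->
  forall v, enorm (A *m v) <= 4 * K / D ^+ 2 * enorm v.
Proof.
move=> A_sym; apply: enorm_mulmx_le_form => // v.
have [->|v0] := eqVneq v 0.
  by rewrite mulmx0 dotv0r normr0 enorm0 expr0n mulr0.
have v_gt0 : 0 < enorm v by rewrite enorm_gt0.
pose r := D / enorm v.
have r_gt0 : 0 < r by rewrite divr_gt0.
have rv_in : enorm (r *: v) <= D by rewrite enormZ gtr0_norm // divfK ?gt_eqF.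
have := quad_ball_form rv_in.
rewrite -scalemxAr dotvZl dotvZr mulrA normrM (gtr0_norm (mulr_gt0 r_gt0 r_gt0)) => form.
rewrite -(ler_pM2l (mulr_gt0 r_gt0 r_gt0)) [X in _ <= X](_ : _ = 4 * K) //.
by rewrite /r; field; rewrite !gt_eqF.
Qed.
End QuadraticOnBall.

Section LineDerivatives.
Variables (R : realType) (n : nat).
Implicit Types (p s w : 'cV[R]_n) (t : R).

Lemma is_derive_line (F dF : 'cV[R]_n -> R) p s t :
  (forall e : R, 0 < e -> exists2 d : R, 0 < d & forall h, enorm h <= d ->
     `|F (p + t *: s + h) - F (p + t *: s) - dF h| <= e * enorm h) ->
  (forall r : R, dF (r *: s) = r * dF s) ->
  is_derive t 1 (fun r => F (p + r *: s)) (dF s).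
Proof.
move=> dF_approx dF_hom; apply: is_derive1_approx => e e_gt0.
have s1_gt0 : 0 < enorm s + 1 by rewrite ltr_pwDr ?enorm_ge0.
have [d d_gt0 approx] := dF_approx _ (divr_gt0 e_gt0 s1_gt0).
exists (d / (enorm s + 1)); first by rewrite divr_gt0.
move=> h; rewrite ler_pdivlMr // => hd.
have hs_le : enorm (h *: s) <= `|h| * (enorm s + 1).
  by rewrite enormZ ler_wpM2l // lerDl.
have := approx _ (le_trans hs_le hd); rewrite scalerDl addrA dF_hom.
move=> /le_trans; apply.
rewrite enormZ mulrCA [e * _]mulrC ler_wpM2l // mulrAC ler_pdivrMr //.
by rewrite ler_wpM2l ?(ltW e_gt0) // lerDl.
Qed.

Lemma is_derive_gradient_line (f : 'cV[R]_n -> R) (G : 'cV[R]_n) p s t :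
  is_gradient f G (p + t *: s) ->
  is_derive t 1 (fun r => f (p + r *: s)) (dotv G s).
Proof. by move=> grad; apply: is_derive_line => [|r]; [exact: grad | exact: dotvZr]. Qed.

Lemma is_derive_jacobian_line (F : 'cV[R]_n -> 'cV[R]_n) (J : 'M[R]_n) w p s t :
  is_jacobian F J (p + t *: s) ->
  is_derive t 1 (fun r => dotv w (F (p + r *: s))) (dotv w (J *m s)).
Proof.
move=> jac; apply: (@is_derive_line (fun y => dotv w (F y)) (fun h => dotv w (J *m h))).
  move=> e e_gt0.
  have w1_gt0 : 0 < enorm w + 1 by rewrite ltr_pwDr ?enorm_ge0.
  have [d d_gt0 approx] := jac _ (divr_gt0 e_gt0 w1_gt0).
  exists d => // h /approx F_approx; rewrite -!dotvBr.
  apply: (le_trans (ler_norm_dotv _ _)).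
  apply: (le_trans (ler_wpM2l (enorm_ge0 _) F_approx)).
  rewrite mulrA ler_wpM2r ?enorm_ge0 // mulrCA ger_pMr //.
  by rewrite ler_pdivrMr // mul1r lerDl.
by move=> r; rewrite -scalemxAr dotvZr.
Qed.
End LineDerivatives.

Section ShiftedModel.
Variables (R : realType) (n : nat) (x : 'cV[R]_n).

Lemma inball_addr (D : R) s : inball x D (x + s) = (enorm s <= D).
Proof. by rewrite /inball (addrC x s) addrK. Qed.

Lemma qmodel_addr c g H s : qmodel x c g H (x + s) = c + dotv g s + 2^-1 * dotv s (H *m s).
Proof. by rewrite /qmodel (addrC x s) addrK. Qed.

Lemma qmodel_grad_addr g H s : qmodel_grad x g H (x + s) = g + H *m s.
Proof. by rewrite /qmodel_grad (addrC x s) addrK. Qed.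
End ShiftedModel.

Section FullyLinearModel.
Variables (R : realType) (n : nat) (f : 'cV[R]_n -> R) (gf : 'cV[R]_n -> 'cV[R]_n) (L : R).
Hypothesis gf_gradient : forall y, is_gradient f (gf y) y.
Hypothesis gf_lipschitz : forall y z, enorm (gf y - gf z) <= L * enorm (y - z).

Lemma taylor1_le p s : `|f (p + s) - f p - dotv (gf p) s| <= L / 2 * enorm s ^+ 2.
Proof.
have slope (t : R) : is_derive t 1 (fun r => dotv (gf p) s * r) (dotv (gf p) s).
  by apply: is_derive_eq; rewrite scaler1.
have := taylor_increment_le (K := L * enorm s ^+ 2) (k := 1) ler01
  (fun t => is_derive_gradient_line (gf_gradient (p + t *: s))) slope.
rewrite /= scale1r scale0r !addr0 mulr1 mulr0 subr0 expr1n mulr1 addrAC mulrAC.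
apply=> t /andP[t_ge0 _]; rewrite -dotvBl expr1.
apply: (le_trans (ler_norm_dotv _ _)).
apply: (le_trans (ler_wpM2r (enorm_ge0 _) (gf_lipschitz _ _))).
rewrite (addrC p) addrK enormZ ger0_norm //; lra.
Qed.

Variables (x : 'cV[R]_n) (c : R) (g : 'cV[R]_n) (H : 'M[R]_n) (D kappa : R).
Hypotheses (L_ge0 : 0 <= L) (D_gt0 : 0 < D) (kappa_ge0 : 0 <= kappa).
Hypothesis model_fit : forall y, inball x D y ->
  `|qmodel x c g H y - f x - dotv (gf x) (y - x)| <= kappa * D ^+ 2.

Let fit s : enorm s <= D ->
  `|c - f x + dotv (g - gf x) s + 2^-1 * dotv s (H *m s)| <= kappa * D ^+ 2.
Proof.
rewrite -(inball_addr x) => /model_fit; rewrite qmodel_addr (addrC x s) addrK dotvBl.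
by congr (`|_| <= _); ring.
Qed.

Lemma fully_linear_value y : inball x D y ->
  `|qmodel x c g H y - f y| <= (kappa + L / 2) * D ^+ 2.
Proof.
rewrite -(subrKC x y); move: (y - x) => s; rewrite inball_addr => s_in.
have : L / 2 * enorm s ^+ 2 <= L / 2 * D ^+ 2.
  by rewrite ler_wpM2l ?divr_ge0 // lerXn2r ?nnegrE ?enorm_ge0 ?(ltW D_gt0).
have := fit s_in; have := taylor1_le x s.
rewrite qmodel_addr dotvBl !ler_norml; lra.
Qed.

Lemma fully_linear_gradient kH y : opnorm H <= kH -> inball x D y ->
  enorm (qmodel_grad x g H y - gf y) <= (2 * kappa + L + 2 * kH) * D.
Proof.
move=> H_le; rewrite -(subrKC x y); move: (y - x) => s; rewrite inball_addr => s_in.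
have center : enorm (g - gf x) <= kappa * D.
  by rewrite -(ler_pM2r D_gt0) -mulrA -expr2; exact: quad_ball_linear fit.
have Hs_le : enorm (H *m s) <= kH * D.
  by apply: (le_trans (ler_enorm_mulmx _ _)); rewrite ler_pM ?opnorm_ge0 ?enorm_ge0.
have step_le : enorm (gf (x + s) - gf x) <= L * D.
  by apply: (le_trans (gf_lipschitz _ _)); rewrite (addrC x s) addrK ler_wpM2l.
have -> : qmodel_grad x g H (x + s) - gf (x + s) = g - gf x + H *m s - (gf (x + s) - gf x).
  by rewrite qmodel_grad_addr opprB [RHS]addrA [in RHS](addrAC g) subrK.
apply: (le_trans (ler_enormB _ _)); apply: (le_trans (lerD (ler_enormD _ _) (lexx _))).
have : 0 <= kH * D by rewrite mulr_ge0 ?(le_trans (opnorm_ge0 H) H_le) ?(ltW D_gt0).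
have : 0 <= kappa * D by rewrite mulr_ge0 ?(ltW D_gt0).
lra.
Qed.
End FullyLinearModel.

Section FullyQuadraticModel.
Variables (R : realType) (n : nat) (f : 'cV[R]_n -> R) (gf : 'cV[R]_n -> 'cV[R]_n).
Variables (Hf : 'cV[R]_n -> 'M[R]_n) (L : R).
Hypothesis gf_gradient : forall y, is_gradient f (gf y) y.
Hypothesis Hf_jacobian : forall y, is_jacobian gf (Hf y) y.
Hypothesis Hf_lipschitz : forall y z, opnorm (Hf y - Hf z) <= L * enorm (y - z).
Hypothesis L_ge0 : 0 <= L.

Lemma hessian_lipschitz_line p s (t : R) u w : 0 <= t ->
  `|dotv w (Hf (p + t *: s) *m u) - dotv w (Hf p *m u)|
    <= L * t * enorm s * enorm u * enorm w.
Proof.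
move=> t_ge0; rewrite -dotvBr -mulmxBl.
apply: (le_trans (ler_norm_dotv _ _)); rewrite mulrC ler_wpM2r ?enorm_ge0 //.
apply: (le_trans (ler_enorm_mulmx _ _)); rewrite ler_wpM2r ?enorm_ge0 //.
apply: (le_trans (Hf_lipschitz _ _)).
by rewrite (addrC p) addrK enormZ ger0_norm // mulrA.
Qed.

Lemma taylor_gradient_le p s : enorm (gf (p + s) - gf p - Hf p *m s) <= L / 2 * enorm s ^+ 2.
Proof.
set r := gf (p + s) - gf p - Hf p *m s.
have slope (t : R) : is_derive t 1 (fun t' => dotv r (Hf p *m s) * t') (dotv r (Hf p *m s)).
  by apply: is_derive_eq; rewrite scaler1.
have := taylor_increment_le (K := enorm r * L * enorm s ^+ 2) (k := 1) ler01
  (fun t => is_derive_jacobian_line r (Hf_jacobian (p + t *: s))) slope.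
rewrite /= scale1r scale0r !addr0 mulr1 mulr0 subr0 expr1n mulr1.
have -> : dotv r (gf (p + s)) - dotv r (Hf p *m s) - dotv r (gf p) = enorm r ^+ 2.
  by rewrite sqr_enorm {4}/r !dotvBr; ring.
rewrite ger0_norm ?sqr_ge0 // => incr.
have sq_le : enorm r ^+ 2 <= enorm r * (L / 2 * enorm s ^+ 2).
  suff /incr : forall t, 0 <= t <= 1 ->
      `|dotv r (Hf (p + t *: s) *m s) - dotv r (Hf p *m s)|
        <= enorm r * L * enorm s ^+ 2 * t ^+ 1.
    lra.
  move=> t /andP[t_ge0 _]; have := hessian_lipschitz_line p s s r t_ge0; lra.
have [r_gt0|r_le0] := ltP 0 (enorm r); first by rewrite -(ler_pM2l r_gt0) -expr2.
by apply: le_trans r_le0 _; rewrite mulr_ge0 ?divr_ge0 ?sqr_ge0.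
Qed.

Lemma taylor2_le p s :
  `|f (p + s) - f p - dotv (gf p) s - 2^-1 * dotv s (Hf p *m s)| <= L / 6 * enorm s ^+ 3.
Proof.
set c := dotv (gf p) s; set d := dotv s (Hf p *m s).
have model (t : R) : is_derive t 1 (fun t' => c * t' + d / 2 * t' ^+ 2) (c + d * t).
  by apply: is_derive_eq; rewrite !scaler1 /GRing.scale /=; field.
have := taylor_increment_le (K := L / 2 * enorm s ^+ 3) (k := 2) ler01
  (fun t => is_derive_gradient_line (gf_gradient (p + t *: s))) model.
rewrite /= scale1r scale0r !addr0 => incr.
suff /incr : forall t, 0 <= t <= 1 ->
    `|dotv (gf (p + t *: s)) s - (c + d * t)| <= L / 2 * enorm s ^+ 3 * t ^+ 2.
  by rewrite !ler_norml; lra.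
move=> t /andP[t_ge0 _].
have := ler_norm_dotv s (gf (p + t *: s) - gf p - Hf p *m (t *: s)).
move/le_trans/(_ (ler_wpM2l (enorm_ge0 s) (taylor_gradient_le p (t *: s)))).
rewrite -scalemxAr !dotvBr dotvZr enormZ (ger0_norm t_ge0) /c !(dotvC (gf _) s) -/d.
rewrite !ler_norml; lra.
Qed.

Lemma second_difference_le p h k :
  `|f (p + h + k) - f (p + h) - f (p + k) + f p - dotv k (Hf p *m h)|
    <= L / 2 * enorm h ^+ 2 * enorm k + L / 2 * enorm h * enorm k ^+ 2
       + L / 3 * enorm k ^+ 3.
Proof.
have E1 := taylor2_le (p + h) k; have E2 := taylor2_le p k.
have G1 := le_trans (ler_norm_dotv k _) (ler_wpM2l (enorm_ge0 k) (taylor_gradient_le p h)).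
have G2 := hessian_lipschitz_line p h k k ler01; rewrite scale1r in G2.
rewrite !dotvBr in G1; rewrite !(dotvC (gf _) k) in E1 E2.
rewrite !ler_norml in E1 E2 G1 G2 *; lra.
Qed.

Lemma hessian_sym p u v : dotv v (Hf p *m u) = dotv u (Hf p *m v).
Proof.
set X := dotv v (Hf p *m u) - dotv u (Hf p *m v).
pose C := L / 2 * enorm u ^+ 2 * enorm v + L / 2 * enorm u * enorm v ^+ 2
  + L / 3 * enorm v ^+ 3 + (L / 2 * enorm v ^+ 2 * enorm u
  + L / 2 * enorm v * enorm u ^+ 2 + L / 3 * enorm u ^+ 3).
have C_ge0 : 0 <= C by rewrite /C !addr_ge0 ?mulr_ge0 ?invr_ge0 ?exprn_ge0 ?enorm_ge0 ?ler0n.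
(* the second difference at scale t is t^2 X up to O(t^3) *)
have scaled t : 0 < t -> `|X| <= t * C.
  move=> t_gt0; have := second_difference_le p (t *: u) (t *: v).
  have := second_difference_le p (t *: v) (t *: u); rewrite (addrAC p (t *: v)).
  rewrite !enormZ (gtr0_norm t_gt0) -!scalemxAr !dotvZl !dotvZr => A2 A1.
  have : `|t ^+ 2 * X| <= t ^+ 2 * (t * C).
    by move: A1 A2; rewrite /X /C !ler_norml; lra.
  by rewrite normrM ger0_norm ?sqr_ge0 // ler_pM2l ?exprn_gt0.
suff : `|X| <= 0 by rewrite normr_le0 subr_eq0 => /eqP.
apply/ler_addgt0Pr => e e_gt0.
have C1_gt0 : 0 < C + 1 by rewrite ltr_pwDr.
apply: (le_trans (scaled _ (divr_gt0 e_gt0 C1_gt0))).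
by rewrite add0r mulrAC ler_pdivrMr // ler_wpM2l ?(ltW e_gt0) // lerDl.
Qed.

Variables (x : 'cV[R]_n) (c : R) (g : 'cV[R]_n) (H : 'M[R]_n) (D kappa : R).
Hypotheses (H_sym : H^T = H) (D_gt0 : 0 < D) (kappa_ge0 : 0 <= kappa).
Hypothesis model_fit : forall y, inball x D y ->
  `|qmodel x c g H y - f x - dotv (gf x) (y - x)
    - 2^-1 * dotv (y - x) (Hf x *m (y - x))| <= kappa * D ^+ 3.

Let fit s : enorm s <= D ->
  `|c - f x + dotv (g - gf x) s + 2^-1 * dotv s ((H - Hf x) *m s)| <= kappa * D ^+ 3.
Proof.
rewrite -(inball_addr x) => /model_fit.
rewrite qmodel_addr (addrC x s) addrK dotvBl mulmxBl dotvBr.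
by congr (`|_| <= _); ring.
Qed.

Lemma hessian_error_center v : enorm ((H - Hf x) *m v) <= 4 * kappa * D * enorm v.
Proof.
have A_sym u w : dotv u ((H - Hf x) *m w) = dotv w ((H - Hf x) *m u).
  by rewrite !mulmxBl !dotvBr dotv_mulmx H_sym dotvC hessian_sym.
have := quad_ball_mulmx D_gt0 fit A_sym v.
by rewrite [4 * _ / _](_ : _ = 4 * kappa * D) //; field; rewrite gt_eqF.
Qed.

Lemma fully_quadratic_value y : inball x D y ->
  `|qmodel x c g H y - f y| <= (kappa + L / 6) * D ^+ 3.
Proof.
rewrite -(subrKC x y); move: (y - x) => s; rewrite inball_addr => s_in.
have : L / 6 * enorm s ^+ 3 <= L / 6 * D ^+ 3.
  by rewrite ler_wpM2l ?divr_ge0 // lerXn2r ?nnegrE ?enorm_ge0 ?(ltW D_gt0).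
have := fit s_in; have := taylor2_le x s.
rewrite qmodel_addr dotvBl mulmxBl dotvBr !ler_norml; lra.
Qed.

Lemma fully_quadratic_gradient y : inball x D y ->
  enorm (qmodel_grad x g H y - gf y) <= (34 * kappa + L / 2) * D ^+ 2.
Proof.
rewrite -(subrKC x y); move: (y - x) => s; rewrite inball_addr => s_in.
have center : enorm (g - gf x) <= kappa * D ^+ 2.
  by rewrite -(ler_pM2r D_gt0) -mulrA -exprSr; exact: quad_ball_linear fit.
have As_le : enorm ((H - Hf x) *m s) <= 4 * kappa * D ^+ 2.
  apply: (le_trans (hessian_error_center s)).
  by rewrite expr2 mulrA ler_wpM2l // !mulr_ge0 ?(ltW D_gt0).
have taylor_le : enorm (gf (x + s) - gf x - Hf x *m s) <= L / 2 * D ^+ 2.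
  apply: (le_trans (taylor_gradient_le x s)).
  by rewrite ler_wpM2l ?divr_ge0 // lerXn2r ?nnegrE ?enorm_ge0 ?(ltW D_gt0).
have -> : qmodel_grad x g H (x + s) - gf (x + s)
    = g - gf x + (H - Hf x) *m s - (gf (x + s) - gf x - Hf x *m s).
  by rewrite qmodel_grad_addr mulmxBl; apply/matrixP => i j; rewrite !mxE; ring.
apply: (le_trans (ler_enormB _ _)); apply: (le_trans (lerD (ler_enormD _ _) (lexx _))).
have : 0 <= kappa * D ^+ 2 by rewrite mulr_ge0 ?exprn_ge0 ?(ltW D_gt0).
lra.
Qed.

Lemma fully_quadratic_hessian y : inball x D y ->
  opnorm (H - Hf y) <= (24 * kappa + L) * D.
Proof.
rewrite -(subrKC x y); move: (y - x) => s; rewrite inball_addr => s_in.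
apply: opnorm_le => v v_le1.
have -> : (H - Hf (x + s)) *m v = (H - Hf x) *m v + (Hf x - Hf (x + s)) *m v.
  by rewrite -mulmxDl addrA subrK.
apply: (le_trans (ler_enormD _ _)).
have Av_le : enorm ((H - Hf x) *m v) <= 4 * kappa * D.
  apply: (le_trans (hessian_error_center v)).
  by rewrite ler_piMr ?mulr_ge0 ?(ltW D_gt0).
have step_le : enorm ((Hf x - Hf (x + s)) *m v) <= L * D.
  apply: (le_trans (ler_enorm_mulmx _ _)).
  apply: (le_trans (ler_wpM2l (opnorm_ge0 _) v_le1)); rewrite mulr1.
  apply: (le_trans (Hf_lipschitz _ _)).
  by rewrite opprD addNKr enormN ler_wpM2l.
have : 0 <= kappa * D by rewrite mulr_ge0 ?(ltW D_gt0).
lra.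
Qed.
End FullyQuadraticModel.

Theorem lemma5p1 (R : realType) (n : nat) (x : 'cV[R]_n) (c : R)
    (g : 'cV[R]_n) (H : 'M[R]_n) (D : R) :
  H^T = H -> 0 < D ->
  (* (a) *)
  (forall (f : 'cV[R]_n -> R) (gf : 'cV[R]_n -> 'cV[R]_n) (Lg kappa : R),
     (exists b : R, forall y, b <= f y) ->
     (forall y, is_gradient f (gf y) y) ->
     0 <= Lg -> (forall y z, enorm (gf y - gf z) <= Lg * enorm (y - z)) ->
     0 < kappa ->
     (forall y, inball x D y ->
        `|qmodel x c g H y - f x - dotv (gf x) (y - x)| <= kappa * D ^+ 2) ->
     forall kappaH : R, opnorm H <= kappaH ->
     forall y, inball x D y ->
       `|qmodel x c g H y - f y| <= (kappa + Lg / 2) * D ^+ 2 /\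
       enorm (qmodel_grad x g H y - gf y)
         <= (2 * kappa + Lg + 2 * kappaH) * D) /\
  (* (b) *)
  (forall (f : 'cV[R]_n -> R) (gf : 'cV[R]_n -> 'cV[R]_n)
          (Hf : 'cV[R]_n -> 'M[R]_n) (LH kappa : R),
     (exists b : R, forall y, b <= f y) ->
     (forall y, is_gradient f (gf y) y) ->
     (forall y, is_jacobian gf (Hf y) y) ->
     0 <= LH -> (forall y z, opnorm (Hf y - Hf z) <= LH * enorm (y - z)) ->
     0 < kappa ->
     (forall y, inball x D y ->
        `|qmodel x c g H y - f x - dotv (gf x) (y - x)
           - 2^-1 * dotv (y - x) (Hf x *m (y - x))| <= kappa * D ^+ 3) ->
     forall y, inball x D y ->
       [/\ `|qmodel x c g H y - f y| <= (kappa + LH / 6) * D ^+ 3,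
           enorm (qmodel_grad x g H y - gf y) <= (34 * kappa + LH / 2) * D ^+ 2
         & opnorm (H - Hf y) <= (24 * kappa + LH) * D]).
Proof.
move=> H_sym D_gt0; split.
- move=> f gf Lg kappa _ grad Lg_ge0 lip /ltW kappa_ge0 fit kH H_le y y_in.
  split; first exact: (fully_linear_value grad lip Lg_ge0 D_gt0 fit y_in).
  exact: (fully_linear_gradient lip Lg_ge0 D_gt0 kappa_ge0 fit H_le y_in).
- move=> f gf Hf LH kappa _ grad jac LH_ge0 lip /ltW kappa_ge0 fit y y_in.
  split.
  + exact: (fully_quadratic_value grad jac lip LH_ge0 D_gt0 fit y_in).
  + exact: (fully_quadratic_gradient grad jac lip LH_ge0 H_sym D_gt0 kappa_ge0 fit y_in).
  + exact: (fully_quadratic_hessian grad jac lip LH_ge0 H_sym D_gt0 kappa_ge0 fit y_in).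
Qed.
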